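(* Let $A$ be a circular $m\times n$ matrix, $b\in\mathbb{Z}_+^m$ and $x^*\in Q(A,b)$ such that every circuit in $D(A,x^* )$ has non-negative cost. Then $x^*\in Q^*(A,b)$.
   Context: Notation: $[n]=\{1,\dots,n\}$ with addition mod $n$ (index $0$ identified with $n$); for $a,c\in[n]$ with $t\ge0$ minimal such that $a+t\equiv c\pmod n$, $[a,c)_n=\{a,\dots,a+t-1\}$ (mod $n$). An $m\times n$ $\{0,1\}$-matrix $A$ is circular if for each row $i$ there are $\ell_i\in[n]$ and an integer $2\le k_i\le n-1$ with row $i$ the incidence vector of $[\ell_i,\ell_i+k_i)_n$. $Q(A,b)=\{x\ge0:Ax\ge b\}$, $Q^*(A,b)=\operatorname{conv}(Q(A,b)\cap\mathbb{Z}^n)$. $D(A)$: digraph (multigraph allowed) on node set $[n]$ (labels mod $n$) with forward arcs $a_i=(\ell_i-1,\ell_i+k_i-1)$ ($i\in[m]$) and $a_{m+j}=(j-1,j)$ ($j\in[n]$), and reverse arcs $\bar a_i=(\ell_i+k_i-1,\ell_i-1)$ ($i\in[m]$) and $\bar a_{m+j}=(j,j-1)$ ($j\in[n]$). A circuit is a simple directed circuit. Costs: $\tilde A=\binom{A}{I}\in\{0,1\}^{(m+n)\times n}$ ($I$ the $n\times n$ identity), $d=\binom{b}{0}\in\mathbb{Z}^{m+n}$, $v$ = last column of $\tilde A$. For $x^*\in Q(A,b)$: $s^*=\tilde Ax^*-d$, $\mu=\lceil\mathbf{1}^Tx^*\rceil-\mathbf{1}^Tx^*$, $c^+(x^* )=\mu(s^*-(1-\mu)v)$,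 $c^-(x^* )=(1-\mu)(s^*+\mu v)$. $D(A,x^* )$ is $D(A)$ where arc $a_k$ ($k\in[m+n]$) has cost $c^+_k(x^* )$ and arc $\bar a_k$ has cost $c^-_k(x^* )$; the cost of a path is the sum of the costs of its arcs. *)

From HB Require Import structures.
From mathcomp Require Import all_boot all_order all_algebra.
From mathcomp Require Import reals.
Set Implicit Arguments. Unset Strict Implicit. Unset Printing Implicit Defensive.
Import Order.TTheory GRing.Theory Num.Theory.
Local Open Scope ring_scope.

(* Conventions: the paper's index set [n] = {1..n} (mod n) is represented by
   'I_n = {0..n-1} via t |-> t-1 (so paper label n, identified with 0, is 0).
   A circular row i is given by its 0-based start l i (= paper ell_i - 1)
   and its length k i: entry (i,j) (0-based column j) is 1 iff
   (j - l i) mod n < k i, i.e. column j+1 lies in [ell_i, ell_i + k_i)_n. *)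

Section Defs.
Variables (R : realType) (m n : nat).

Definition circ_mx (l : 'I_m -> 'I_n) (k : 'I_m -> nat) : 'M[R]_(m, n) :=
  \matrix_(i < m, j < n) (if ((j + n - l i) %% n < k i)%N then 1 else 0).

Definition circular (A : 'M[R]_(m, n)) (l : 'I_m -> 'I_n) (k : 'I_m -> nat) :=
  (forall i, 2 <= k i <= n.-1)%N /\ A = circ_mx l k.

Definition inQ (A : 'M[R]_(m, n)) (b : 'I_m -> nat) (x : 'cV[R]_n) : Prop :=
  (forall j, 0 <= x j 0) /\ (forall i, (b i)%:R <= (A *m x) i 0).

Definition inQstar (A : 'M[R]_(m, n)) (b : 'I_m -> nat) (x : 'cV[R]_n) : Prop :=
  exists (p : nat) (pts : 'I_p -> 'cV[R]_n) (lam : 'I_p -> R),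
    [/\ forall t, inQ A b (pts t),
        forall t j, pts t j 0 \is a Num.int,
        forall t, 0 <= lam t,
        \sum_(t < p) lam t = 1
      & x = \sum_(t < p) lam t *: pts t].

(* Arcs of D(A): index k in [m+n] is inl i (k = i, i in [m]) or inr j
   (k = m + j); the bool is true for forward arcs a_k, false for reverse
   arcs \bar a_k. *)
Definition darc := (('I_m + 'I_n) * bool)%type.

Definition nsucc (a : nat) : nat := (a %% n)%N.

Variables (l : 'I_m -> 'I_n) (k : 'I_m -> nat).

(* forward arc endpoints: node labels of the paper taken mod n (label n = 0);
   a_i = (ell_i - 1, ell_i + k_i - 1) = (l i, l i + k i), a_(m+j) = (j-1, j)
   with the 0-based column index j0 = j-1 of inr j0. *)
Definition ftail (e : 'I_m + 'I_n) : nat :=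
  match e with inl i => l i | inr j => j end.
Definition fhead (e : 'I_m + 'I_n) : nat :=
  match e with inl i => (l i + k i)%N | inr j => j.+1 end.

Definition atail (a : darc) : nat :=
  nsucc (if a.2 then ftail a.1 else fhead a.1).
Definition ahead (a : darc) : nat :=
  nsucc (if a.2 then fhead a.1 else ftail a.1).

(* A circuit: simple directed closed walk, given by its nonempty sequence of
   arcs e_1 ... e_p with head e_t = tail e_(t+1) cyclically and distinct
   tails (hence distinct nodes). *)
Definition circuit (c : seq darc) : bool :=
  [&& c != [::], cycle (fun e f => ahead e == atail f) c & uniq (map atail c)].

Variable (A : 'M[R]_(m, n)) (b : 'I_m -> nat) (x : 'cV[R]_n).

(* s^* = tilde A x^* - d *)
Definition sstar (e : 'I_m + 'I_n) : R :=
  match e with inl i => (A *m x) i 0 - (b i)%:R | inr j => x j 0 end.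

Definition vlast (e : 'I_m + 'I_n) : R :=
  match e with
  | inl i => \sum_(j < n | (j : nat) == n.-1) A i j (* = A i (last column) *)
  | inr j => (if j == n.-1 :> nat then 1 else 0)
  end.

Definition mu : R :=
  let s := \sum_(j < n) x j 0 in (Num.ceil s)%:~R - s.

Definition cplus (e : 'I_m + 'I_n) : R := mu * (sstar e - (1 - mu) * vlast e).
Definition cminus (e : 'I_m + 'I_n) : R := (1 - mu) * (sstar e + mu * vlast e).

Definition arc_cost (a : darc) : R := if a.2 then cplus a.1 else cminus a.1.

Definition path_cost (c : seq darc) : R := \sum_(a <- c) arc_cost a.

End Defs.

From HB Require Import structures.
From mathcomp Require Import all_boot all_order all_algebra.
From mathcomp Require Import reals.
From mathcomp Require Import zify ring lra.
Import Order.TTheory GRing.Theory Num.Theory.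
Local Open Scope ring_scope.
Set Implicit Arguments. Unset Strict Implicit. Unset Printing Implicit Defensive.

(* Let s be the coordinate sum of x and M = ceil s - s.

   If s is an integer, the prefix sums Y of x turn the constraints of Q(A,b) into difference
   constraints Y_head - Y_tail >= d_e on the forward arcs e of D(A), where an arc wrapping past
   the last column also picks up the shift s.  Such a system is integral: with D the largest gap
   between a coordinate of Y and its ceiling, Y = (1 - D) ceil(Y) + D Y', where Y' moves every
   coordinate away from its ceiling by the factor 1/D; both ceil(Y) and Y' are again feasible,
   and Y' has fewer fractional coordinates.

   If 0 < M < 1, the absence of negative circuits in D(A,x) yields node potentials pi (costs of
   shortest walks of bounded length).  The tension g of pi, with an extra M(1-M) on the wrapping
   arcs, is squeezed between -(1-M) s* and M s* on every arc, so that x - g/M and x + g/(1-M) are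
   in Q(A,b), have the integral coordinate sums ceil s - 1 and ceil s, and average to x with the
   weights M and 1 - M. *)

(** * Potentials in digraphs without negative circuits *)

Lemma not_uniq_map_split (T : eqType) (U : eqType) (f : T -> U) (s : seq T) :
  ~~ uniq (map f s) ->
  exists p x q y r, s = p ++ x :: q ++ y :: r /\ f x = f y.
Proof.
elim: s => //= z s IH; rewrite negb_and negbK => /orP[/mapP[y ys fzy]|].
  by case/splitPr: ys => q r; exists [::], z, q, y, r.
by case/IH=> [p [x [q [y [r [-> fxy]]]]]]; exists (z :: p), x, q, y, r.
Qed.

Lemma uniq_map_size (T : Type) (V : finType) (f : T -> V) (s : seq T) :
  uniq (map f s) -> (size s <= #|V|)%N.
Proof. by move/card_uniqP; rewrite size_map => <-; apply: max_card. Qed.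

Section Potential.
Variables (R : realDomainType) (V E : finType) (tl hd : E -> V) (w : E -> R).

Definition adj (e f : E) := hd e == tl f.
Definition cost (s : seq E) := \sum_(e <- s) w e.
(* The empty walk ends at every node: it plays the role of a virtual source joined to every
   node by an arc of cost 0.  This is also why seeding the minimum in [potential] with 0 is
   harmless. *)
Definition walk_to (v : V) (s : seq E) :=
  sorted adj s && (last v [seq hd e | e <- s] == v).

Hypothesis circuit_cost_ge0 : forall c : seq E,
  c != [::] -> cycle adj c -> uniq (map tl c) -> 0 <= cost c.

Lemma cost_cat s1 s2 : cost (s1 ++ s2) = cost s1 + cost s2.
Proof. exact: big_cat. Qed.

Lemma path_split_loop x q y r : tl x = tl y ->
  path adj x (q ++ y :: r) -> cycle adj (x :: q) && path adj y r.
Proof.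
by move=> txy; rewrite cat_path /= rcons_path => /and3P[-> + ->]; rewrite /adj txy => ->.
Qed.

Lemma cycle_split_loop x q y r : tl x = tl y ->
  cycle adj (x :: q ++ y :: r) -> cycle adj (x :: q) && cycle adj (y :: r).
Proof.
move=> txy cyc; have /(path_split_loop txy)/andP[-> /=] : path adj x (q ++ y :: rcons r x).
  by rewrite -rcons_cons -rcons_cat.
by rewrite !rcons_path => /andP[-> ]; rewrite /adj txy.
Qed.

Lemma sorted_split_loop p x q y r : tl x = tl y ->
  sorted adj (p ++ x :: q ++ y :: r) -> cycle adj (x :: q) && sorted adj (p ++ y :: r).
Proof.
move=> txy; case: p => [|z p] sp; first exact: path_split_loop.
have /and3P[zp + /(path_split_loop txy)/andP[-> yr]] :
    [&& path adj z p, adj (last z p) x & path adj x (q ++ y :: r)].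
  by move: sp; rewrite /= cat_path.
by rewrite /= cat_path /= zp yr /adj txy => ->.
Qed.

Lemma closed_walk_cost_ge0 c : cycle adj c -> 0 <= cost c.
Proof.
elim: {c}(size c).+1 {-2}c (ltnSn (size c)) => // N IH c cN cyc.
have [uc|] := boolP (uniq (map tl c)).
  by case: c cyc uc {cN} => [|e c] cyc uc; [rewrite /cost big_nil | exact: circuit_cost_ge0].
case/not_uniq_map_split=> [p [x [q [y [r [Ec txy]]]]]].
have Erot : rot (size p) c = (x :: q) ++ (y :: r ++ p) by rewrite Ec rot_size_cat /= -catA.
move: cyc; rewrite -(rot_cycle (size p)) Erot => /(cycle_split_loop txy)/andP[cq cr].
have ltc s : (size s < size c)%N -> (size s < N)%N by lia.
have sizes : size c = (size p + size q + size r).+2.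
  by rewrite Ec size_cat /= size_cat /=; lia.
rewrite /cost (perm_big (rot (size p) c)) -/(cost _); last by rewrite perm_sym perm_rot.
rewrite Erot cost_cat addr_ge0 // IH // ltc // sizes /= ?size_cat /=; lia.
Qed.

Lemma walk_to_rcons s e : walk_to (tl e) s -> walk_to (hd e) (rcons s e).
Proof.
rewrite /walk_to map_rcons last_rcons eqxx andbT.
by case: s => [|x s] //=; rewrite rcons_path (last_map hd) => /andP[-> ].
Qed.

Lemma walk_to_split_loop v p x q y r : tl x = tl y ->
  walk_to v (p ++ x :: q ++ y :: r) -> cycle adj (x :: q) && walk_to v (p ++ y :: r).
Proof.
rewrite /walk_to => txy /andP[/(sorted_split_loop txy)/andP[-> ->]].
by rewrite !map_cat !last_cat /= map_cat last_cat.
Qed.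

Lemma shorten_walk_to v s : walk_to v s ->
  exists s', [/\ walk_to v s', (size s' <= #|V|)%N & cost s' <= cost s].
Proof.
elim: {s}(size s).+1 {-2}s (ltnSn (size s)) => // N IH s sN ws.
have [|long] := leqP (size s) #|V|; first by exists s.
have /not_uniq_map_split[p [x [q [y [r [Es txy]]]]]] : ~~ uniq (map tl s).
  by apply: contraTN long => /uniq_map_size; rewrite -leqNgt.
move: ws; rewrite Es => /(walk_to_split_loop txy)/andP[cq wr].
have sN' : (size (p ++ y :: r) < N)%N.
  by move: sN; rewrite Es !size_cat /= size_cat /=; lia.
have [s' [ws' s'V cs']] := IH _ sN' wr.
exists s'; split=> //; apply: le_trans cs' _.
by rewrite -cat_cons !cost_cat addrCA lerDr; apply: closed_walk_cost_ge0.
Qed.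

Fixpoint seqs_upto (N : nat) : seq (seq E) :=
  if N is N'.+1 then [::] :: [seq e :: s | e <- enum E, s <- seqs_upto N']
  else [:: [::]].

Lemma mem_seqs_upto N s : (size s <= N)%N -> s \in seqs_upto N.
Proof.
elim: N s => [|N IH] [|e s] //= sN.
by rewrite in_cons allpairs_f ?mem_enum ?IH ?orbT.
Qed.

Definition potential (v : V) : R :=
  \big[Order.min/0]_(s <- seqs_upto #|V| | walk_to v s) cost s.

Lemma potential_le v s : walk_to v s -> potential v <= cost s.
Proof.
case/shorten_walk_to=> s' [ws' s'V cs']; apply: le_trans cs'.
exact: ge_bigmin_seq (mem_seqs_upto s'V) ws'.
Qed.

Lemma potential_feasible e : potential (hd e) <= potential (tl e) + w e.
Proof.
have extend s : walk_to (tl e) s -> potential (hd e) - w e <= cost s.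
  move/walk_to_rcons/potential_le; rewrite lerBlDr.
  by rewrite /cost -cats1 big_cat big_seq1.
rewrite -lerBlDr; apply: le_bigmin => [|s ws]; last exact: extend.
by have := extend [::] (eqxx (tl e)); rewrite /cost big_nil.
Qed.

End Potential.

Lemma potential_exists (R : realDomainType) (V E : finType) (tl hd : E -> V) (w : E -> R) :
  (forall c : seq E,
     c != [::] -> cycle (adj tl hd) c -> uniq (map tl c) -> 0 <= cost w c) ->
  exists pi : V -> R, forall e, pi (hd e) <= pi (tl e) + w e.
Proof. by move=> H; exists (potential tl hd w); apply: potential_feasible. Qed.

(** * Convex hulls and integrality of difference constraints *)

Definition in_hull (R : numDomainType) (U : lmodType R) (P : U -> Prop) (y : U) :=
  exists s : seq (R * U),
    [/\ forall z, z \in s -> 0 <= z.1 /\ P z.2,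
        \sum_(z <- s) z.1 = 1 & y = \sum_(z <- s) z.1 *: z.2].

Section Hull.
Variables (R : numDomainType) (U : lmodType R).

Lemma in_hull1 (P : U -> Prop) y : P y -> in_hull P y.
Proof.
move=> Py; exists [:: (1, y)]; rewrite !big_seq1 scale1r; split=> // z.
by rewrite inE => /eqP ->.
Qed.

Lemma in_hull_mix (P : U -> Prop) a y1 y2 : 0 <= a <= 1 ->
  in_hull P y1 -> in_hull P y2 -> in_hull P (a *: y1 + (1 - a) *: y2).
Proof.
move=> /andP[a0 a1] [s1 [P1 S1 E1]] [s2 [P2 S2 E2]].
exists ([seq (a * z.1, z.2) | z <- s1] ++ [seq ((1 - a) * z.1, z.2) | z <- s2]).
rewrite !big_cat !big_map /= -!mulr_sumr S1 S2 !mulr1 subrKC E1 E2 !scaler_sumr.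
split=> //.
- move=> z; rewrite mem_cat => /orP[] /mapP[z' z's ->] /=.
    by have [z'0 Pz'] := P1 _ z's; rewrite mulr_ge0.
  by have [z'0 Pz'] := P2 _ z's; rewrite mulr_ge0 ?subr_ge0.
- by congr (_ + _); apply: eq_bigr => z _; rewrite scalerA.
Qed.

Lemma in_hull_affine (V : lmodType R) (f : U -> V) (P : U -> Prop) (Q : V -> Prop) y :
  (forall s : seq (R * U), \sum_(z <- s) z.1 = 1 ->
     f (\sum_(z <- s) z.1 *: z.2) = \sum_(z <- s) z.1 *: f z.2) ->
  (forall z, P z -> Q (f z)) -> in_hull P y -> in_hull Q (f y).
Proof.
move=> f_aff PQ [s [Ps S1 ->]]; exists [seq (z.1, f z.2) | z <- s].
rewrite !big_map f_aff //; split=> // z /mapP[z' z's ->] /=.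
by have [-> /PQ] := Ps _ z's.
Qed.

End Hull.

Definition integral (R : archiNumDomainType) (N : nat) (W : 'cV[R]_N) :=
  forall t, W t 0 \is a Num.int.

Section CeilingGap.
Variable R : archiRealFieldType.
Implicit Types a b : R.

Definition gap a : R := (Num.ceil a)%:~R - a.

Lemma gap_ge0 a : 0 <= gap a.
Proof. by rewrite subr_ge0 ceil_ge. Qed.

Lemma gap_lt1 a : gap a < 1.
Proof. by have := ceilB1_lt a; rewrite intrB /gap; lra. Qed.

Lemma gap_eq0 a : (gap a == 0) = (a \is a Num.int).
Proof. by rewrite intrEceil subr_eq0. Qed.

Lemma ceil_diff_ge a b (c : int) : c%:~R <= a - b -> c <= Num.ceil a - Num.ceil b.
Proof.
move=> h; have : Num.ceil (b + c%:~R) <= Num.ceil a by apply: le_ceil; lra.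
by rewrite ceilDrz ?intr_int // intrKceil lerBrDl.
Qed.

Definition stretch (D a : R) : R := (Num.ceil a)%:~R - gap a / D.

Lemma stretch_diff_ge (D a b : R) (c : int) : 0 < D -> gap a <= D -> gap b <= D ->
  c%:~R <= a - b -> c%:~R <= stretch D a - stretch D b.
Proof.
move=> D0 aD bD cab; rewrite /stretch.
have ga1 : gap a / D <= 1 by rewrite ler_pdivrMr // mul1r.
have gb0 : 0 <= gap b / D by rewrite divr_ge0 ?gap_ge0 ?ltW.
have [dc | dc] : Num.ceil a - Num.ceil b = c \/ c + 1 <= Num.ceil a - Num.ceil b.
- by have := ceil_diff_ge cab; lia.
- have gab : gap a / D <= gap b / D.
    by apply: ler_wpM2r; [rewrite invr_ge0 ltW | move: cab; rewrite /gap -dc intrB; lra].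
  by move: gab; rewrite -dc intrB; lra.
- by move: dc; rewrite -(ler_int R) intrD intrB; lra.
Qed.

Lemma gap_stretch_decomp (D a : R) : D != 0 ->
  a = (1 - D) * (Num.ceil a)%:~R + D * stretch D a.
Proof. by move=> D0; rewrite /stretch /gap; field. Qed.

End CeilingGap.

Section DifferenceConstraints.
Variables (R : archiRealFieldType) (N : nat) (K : finType).
Variables (u v : K -> 'I_N) (c : K -> int).
Implicit Type W : 'cV[R]_N.

Definition diff_feasible W := forall e, (c e)%:~R <= W (u e) 0 - W (v e) 0.

Definition ceilv W : 'cV[R]_N := \col_t (Num.ceil (W t 0))%:~R.
Definition stretchv D W : 'cV[R]_N := \col_t stretch D (W t 0).
Definition nonint W := [set t | W t 0 \isn't a Num.int].

Lemma ceilv_feasible W : diff_feasible W -> diff_feasible (ceilv W).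
Proof. by move=> fW e; rewrite !mxE -intrB ler_int ceil_diff_ge. Qed.

Lemma ceilv_integral W : integral (ceilv W).
Proof. by move=> t; rewrite mxE intr_int. Qed.

Lemma stretchv_feasible D W : 0 < D -> (forall t, gap (W t 0) <= D) ->
  diff_feasible W -> diff_feasible (stretchv D W).
Proof. by move=> D0 WD fW e; rewrite !mxE stretch_diff_ge. Qed.

Lemma ceilv_stretchv D W : D != 0 -> W = (1 - D) *: ceilv W + D *: stretchv D W.
Proof. by move=> D0; apply/matrixP => t j; rewrite (ord1 j) !mxE -gap_stretch_decomp. Qed.

Lemma nonint_stretchv D W ts : D = gap (W ts 0) -> D != 0 ->
  nonint (stretchv D W) \proper nonint W.
Proof.
move=> Dts D0; apply/properP; split.
  apply/subsetP => t; rewrite !inE; apply: contraNN; rewrite -gap_eq0 => /eqP gt0.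
  by rewrite mxE /stretch gt0 mul0r subr0 intr_int.
exists ts; first by rewrite inE -gap_eq0 -Dts.
by rewrite inE negbK mxE /stretch -Dts divff // rpredB ?intr_int ?rpred1.
Qed.

Lemma diff_feasible_in_int_hull W :
  diff_feasible W -> in_hull (fun Z => diff_feasible Z /\ integral Z) W.
Proof.
elim: {W}#|nonint W|.+1 {-2}W (ltnSn #|nonint W|) => // n IH W Wn fW.
have [Wint | ] := boolP [forall t, W t 0 \is a Num.int].
  by apply: in_hull1; split=> // t; apply: (forallP Wint).
rewrite negb_forall => /existsP[t0 Wt0].
have [ts _ Dmax] := @arg_maxP _ _ _ t0 xpredT (fun t => gap (W t 0)) isT.
set D := gap (W _ 0) in Dmax.
have D0 : 0 < D by apply: lt_le_trans (Dmax t0 isT); rewrite lt_def gap_eq0 Wt0 gap_ge0.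
rewrite (ceilv_stretchv W (lt0r_neq0 D0)) -{2}(subKr 1 D).
have D1 : D < 1 := gap_lt1 _.
apply: in_hull_mix; first by apply/andP; split; lra.
  by apply: in_hull1; split; [apply: ceilv_feasible | apply: ceilv_integral].
apply: IH; last by apply: stretchv_feasible => // t; apply: Dmax.
rewrite -ltnS (leq_trans _ Wn) // ltnS proper_card //.
by rewrite (nonint_stretchv (ts := ts)) ?lt0r_neq0.
Qed.

End DifferenceConstraints.

(** * Circular matrices *)

Lemma cyclic_interval_indicator j L K N : (j < N)%N -> (L < N)%N -> (K <= N)%N ->
  (((j + N - L) %% N < K) + (j < L) = (j < L + K) + (j < L + K - N))%N.
Proof.
move=> jN LN KN; have [Lj|jL] := leqP L j.
  have -> : ((j + N - L) %% N = j - L)%N by rewrite -addnBAC // modnDr modn_small //; lia.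
  by case: (ltnP (j - L) K); case: (ltnP j (L + K)); case: (ltnP j (L + K - N)); lia.
have -> : ((j + N - L) %% N = j + N - L)%N by rewrite modn_small //; lia.
by case: (ltnP (j + N - L) K); case: (ltnP j (L + K)); case: (ltnP j (L + K - N)); lia.
Qed.

Lemma inZp_self p : inZp p.+1 = ord0 :> 'I_p.+1.
Proof. by apply: val_inj; rewrite /= modnn. Qed.

Lemma inZp_subn p t : (p.+1 <= t)%N -> inZp (t - p.+1) = inZp t :> 'I_p.+1.
Proof. by move=> pt; apply: val_inj; rewrite /= -{2}(subnK pt) modnDr. Qed.

Section ExtendedRows.
Variables (R : realType) (m N : nat) (A : 'M[R]_(m, N)) (b : 'I_m -> nat).

(* ext_row A z is the vector tilde A z of the paper, indexed like the forward arcs of D(A). *)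
Definition ext_row (z : 'cV[R]_N) (e : 'I_m + 'I_N) : R :=
  match e with inl i => (A *m z) i 0 | inr j => z j 0 end.

Definition demand (e : 'I_m + 'I_N) : nat := if e is inl i then b i else 0%N.

Lemma inQ_ext_row z : inQ A b z <-> forall e, (demand e)%:R <= ext_row z e.
Proof.
split=> [[z0 Az] [i|j] | H]; [exact: Az | exact: z0 | split=> [j|i]].
  exact: H (inr j).
exact: H (inl i).
Qed.

Lemma sstar_ext_row x e : sstar A b x e = ext_row x e - (demand e)%:R.
Proof. by case: e => [i|j] //=; rewrite subr0. Qed.

Lemma ext_row_translate y z t e : ext_row (y + t *: z) e = ext_row y e + t * ext_row z e.
Proof. by case: e => [i|j] /=; rewrite ?mulmxDr -?scalemxAr !mxE. Qed.

Lemma inQ_translate x z t :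
  (forall e, - sstar A b x e <= t * ext_row z e) -> inQ A b (x + t *: z).
Proof.
move=> H; apply/inQ_ext_row => e; rewrite ext_row_translate.
by have := H e; rewrite sstar_ext_row; lra.
Qed.

End ExtendedRows.

Section CircularRows.
Variables (R : realType) (m n : nat) (l : 'I_m -> 'I_n.+1) (k : 'I_m -> nat).
Hypothesis k_le : forall i, (k i <= n.+1)%N.

Definition psum (z : 'cV[R]_n.+1) (t : nat) : R := \sum_(j < n.+1 | (j < t)%N) z j 0.

Lemma psum0 z : psum z 0 = 0.
Proof. by rewrite /psum big_pred0. Qed.

Lemma psum_ge z t : (n.+1 <= t)%N -> psum z t = \sum_j z j 0.
Proof. by move=> nt; apply: eq_bigl => j; rewrite (leq_trans (ltn_ord j)). Qed.

Lemma psumS z (j : 'I_n.+1) : psum z j.+1 = psum z j + z j 0.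
Proof.
rewrite /psum (bigD1 j) //= addrC; congr (_ + _).
by apply: eq_bigl => i; rewrite ltnS -(inj_eq val_inj) /= andbC -ltn_neqAle.
Qed.

Lemma circ_mulmx_psum z i : (circ_mx R l k *m z) i 0 =
  psum z (l i + k i) - psum z (l i) + psum z (l i + k i - n.+1).
Proof.
rewrite mxE /psum !(big_mkcond (fun j : 'I_n.+1 => (_ < _)%N)) -sumrB -big_split.
apply: eq_bigr => j _ /=; rewrite mxE.
move: (cyclic_interval_indicator (ltn_ord j) (ltn_ord (l i)) (k_le i)).
case: (_ %% _ < _)%N; case: (j < l i)%N; case: (j < _ + _)%N; case: (j < _ - _)%N => //= _;
  ring.
Qed.

(* The tension of the node potential W (nodes 0, ..., n taken cyclically): the column j becomes
   the arc from j to j + 1, and the arc wrapping from n back to 0 carries the extra term c. *)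
Definition tension (W : 'cV[R]_n.+1) (c : R) : 'cV[R]_n.+1 :=
  \col_j (W (inZp j.+1) 0 - W j 0 + c * (j == ord_max)%:R).

Definition wraps (e : 'I_m + 'I_n.+1) : bool := (n.+1 <= fhead l k e)%N.

Lemma wraps_inr j : wraps (inr j) = (j == n :> nat).
Proof. by rewrite /wraps /= ltnS eqn_leq leq_ord. Qed.

Lemma psum_tension W c t : (t <= n.+1)%N ->
  psum (tension W c) t = W (inZp t) 0 - W ord0 0 + c * (t == n.+1)%:R.
Proof.
elim: t => [|t IH] tn.
  by rewrite psum0 (_ : inZp 0 = ord0) ?subrr ?mulr0 ?addr0 //; apply: val_inj.
rewrite (psumS _ (Ordinal tn)) IH 1?ltnW // mxE (_ : Ordinal tn = inZp t); last first.
  by apply: val_inj; rewrite /= modn_small.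
rewrite -(inj_eq val_inj) /= !eqSS (ltn_eqF tn) mulr0 modn_small //; ring.
Qed.

Lemma sum_tension W c : \sum_j tension W c j 0 = c.
Proof.
by rewrite -(psum_ge _ (leqnn _)) psum_tension // inZp_self eqxx subrr mulr1 add0r.
Qed.

Lemma ext_row_tension W c e :
  ext_row (circ_mx R l k) (tension W c) e =
  W (inZp (fhead l k e)) 0 - W (inZp (ftail l e)) 0 + c * (wraps e)%:R.
Proof.
case: e => [i|j] /=; last by rewrite mxE valZpK wraps_inr -(inj_eq val_inj).
have li := ltn_ord (l i); have lF := ltn_eqF li; have ki := k_le i.
rewrite circ_mulmx_psum /wraps /=; have [wrap | nowrap] := leqP n.+1 (l i + k i).
  have wF : ((l i + k i - n.+1)%N == n.+1) = false by apply: ltn_eqF; lia.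
  have wn : (l i + k i - n.+1 <= n.+1)%N by lia.
  rewrite psum_ge // -(psum_ge _ (leqnn _)).
  rewrite !psum_tension ?inZp_subn ?inZp_self // 1?ltnW //.
  by rewrite eqxx lF wF; ring.
rewrite (_ : (l i + k i - n.+1 = 0)%N); last lia.
rewrite !psum_tension // 1?ltnW // (_ : inZp 0 = ord0); last by apply: val_inj.
by rewrite lF ltn_eqF //; ring.
Qed.

Lemma vlast_circ e : vlast (circ_mx R l k) e = (wraps e)%:R.
Proof.
case: e => [i|j] /=; last by rewrite wraps_inr; case: (_ == _).
rewrite (big_pred1 ord_max); last by move=> j; rewrite /= -(inj_eq val_inj).
rewrite mxE /wraps /=; have li := leq_ord (l i).
rewrite (_ : (n + n.+1 - l i = (n - l i) + n.+1)%N); last lia.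
rewrite modnDr modn_small; last lia.
have -> : (n - l i < k i)%N = (n < l i + k i)%N by apply/idP/idP; lia.
by case: ltnP.
Qed.

Definition prefix (z : 'cV[R]_n.+1) : 'cV[R]_n.+1 := \col_t psum z t.

Lemma tension_prefix (z : 'cV[R]_n.+1) (c : R) :
  \sum_j z j 0 = c -> tension (prefix z) c = z.
Proof.
move=> zc; apply/matrixP => j j0; rewrite (ord1 j0) !mxE /=.
have [-> | jn] := eqVneq j ord_max.
  by rewrite modnn psum0 -zc -(psum_ge _ (leqnn _)) (psumS _ ord_max) /= mulr1n mulr1; ring.
have jS : (j.+1 < n.+1)%N.
  by rewrite ltn_neqAle ltn_ord andbT -(inj_eq val_inj) in jn *.
by rewrite modn_small // psumS /= mulr0n mulr0; ring.
Qed.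

Lemma tension_integral W (c : int) : integral W -> integral (tension W c%:~R).
Proof. by move=> Wint j; rewrite mxE rpredD ?rpredB ?rpredM ?intr_int ?natr_int. Qed.

Lemma tension_affine c (s : seq (R * 'cV[R]_n.+1)) : \sum_(z <- s) z.1 = 1 ->
  tension (\sum_(z <- s) z.1 *: z.2) c = \sum_(z <- s) z.1 *: tension z.2 c.
Proof.
move=> s1; apply/matrixP => j j0; rewrite (ord1 j0) !mxE !summxE.
rewrite -[c * _]mul1r -{1}s1 mulr_suml -sumrB -big_split.
by apply: eq_bigr => z _; rewrite !mxE /=; ring.
Qed.

Section Slice.
Variables (b : 'I_m -> nat) (beta : int).

(* The constraints of Q(A,b) on a point with coordinate sum beta, in terms of its prefix sums. *)
Definition wrapped_demand (e : 'I_m + 'I_n.+1) : int :=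
  (demand b e)%:Z - (if wraps e then beta else 0).

Definition circ_feasible (W : 'cV[R]_n.+1) :=
  diff_feasible (fun e => inZp (fhead l k e)) (fun e => inZp (ftail l e)) wrapped_demand W.

Lemma inQ_tension W : inQ (circ_mx R l k) b (tension W beta%:~R) <-> circ_feasible W.
Proof.
rewrite inQ_ext_row; split=> H e; have := H e.
all: rewrite ext_row_tension /wrapped_demand intrB -pmulrn.
all: by case: wraps; rewrite ?mulr1 ?mulr0; lra.
Qed.

Lemma inQ_int_sum_in_hull x : inQ (circ_mx R l k) b x -> \sum_j x j 0 = beta%:~R ->
  in_hull (fun z => inQ (circ_mx R l k) b z /\ integral z) x.
Proof.
move=> xQ xsum; rewrite -(tension_prefix xsum).
have /diff_feasible_in_int_hull : circ_feasible (prefix x).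
  by apply/inQ_tension; rewrite tension_prefix.
apply: (in_hull_affine (f := tension^~ beta%:~R) (tension_affine _)).
by move=> W [/inQ_tension WQ Wint]; split; last exact: tension_integral.
Qed.

End Slice.
End CircularRows.

(** * Splitting along a potential of D(A, x) *)

Section CircularPotential.
Variables (R : realType) (m n : nat) (l : 'I_m -> 'I_n.+1) (k : 'I_m -> nat).
Variables (b : 'I_m -> nat) (x : 'cV[R]_n.+1).
Hypothesis k_le : forall i, (k i <= n.+1)%N.
Local Notation A := (circ_mx R l k).

Definition arc_tail (a : darc m n.+1) : 'I_n.+1 :=
  inZp (if a.2 then ftail l a.1 else fhead l k a.1).
Definition arc_head (a : darc m n.+1) : 'I_n.+1 :=
  inZp (if a.2 then fhead l k a.1 else ftail l a.1).

Lemma circuit_potential : (forall c, circuit l k c -> 0 <= path_cost A b x c) ->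
  exists pi : 'I_n.+1 -> R, forall a, pi (arc_head a) <= pi (arc_tail a) + arc_cost A b x a.
Proof.
move=> Hc; apply: potential_exists => c c0 cyc uc; apply: Hc; rewrite /circuit c0 /=.
rewrite -(eq_cycle (e := adj arc_tail arc_head)) => [|e f]; last first.
  by rewrite /adj -(inj_eq val_inj).
by rewrite cyc; move: uc; rewrite -(map_inj_uniq val_inj) -map_comp.
Qed.

Lemma mu_gap : mu x = gap (\sum_j x j 0).
Proof. by []. Qed.

Section Split.
Variable pi : 'I_n.+1 -> R.
Hypothesis pi_potential : forall a, pi (arc_head a) <= pi (arc_tail a) + arc_cost A b x a.
Let M := mu x.
Let g := tension (\col_t pi t) (M * (1 - M)).

Lemma tension_sstar_bounds e :
  - ((1 - M) * sstar A b x e) <= ext_row A g e <= M * sstar A b x e.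
Proof.
have := pi_potential (e, true); have := pi_potential (e, false).
rewrite ext_row_tension // !mxE /arc_cost /cplus /cminus vlast_circ /= -/M.
by move=> h1 h2; apply/andP; split; nra.
Qed.

Lemma split_by_potential : 0 < M -> inQ A b x ->
  exists x1 x2 : 'cV[R]_n.+1,
    [/\ x = M *: x1 + (1 - M) *: x2, inQ A b x1, inQ A b x2,
        \sum_j x1 j 0 = (Num.ceil (\sum_j x j 0) - 1)%:~R
      & \sum_j x2 j 0 = (Num.ceil (\sum_j x j 0))%:~R].
Proof.
move=> M0 xQ; have M1 : M < 1 by rewrite /M mu_gap gap_lt1.
have M0' : M != 0 by rewrite lt0r_neq0.
have M1' : 1 - M != 0 by rewrite lt0r_neq0 ?subr_gt0.
have sum_shift t : \sum_j (x + t *: g) j 0 = \sum_j x j 0 + t * (M * (1 - M)).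
  rewrite (eq_bigr (fun j => x j 0 + t * g j 0)) => [|j _]; last by rewrite !mxE.
  by rewrite big_split -mulr_sumr sum_tension.
exists (x + (- M^-1) *: g), (x + (1 - M)^-1 *: g); split.
- by apply/matrixP => i j; rewrite !mxE; field; rewrite M0' M1'.
- apply: inQ_translate => e; have /andP[_ up] := tension_sstar_bounds e.
  by rewrite mulNr lerN2 ler_pdivrMl // mulrC.
- apply: inQ_translate => e; have /andP[lo _] := tension_sstar_bounds e.
  by rewrite ler_pdivlMl ?subr_gt0 // mulrN.
- by rewrite sum_shift mulNr mulrA mulVf // mul1r intrB /M mu_gap /gap; ring.
- by rewrite sum_shift mulrCA mulVf // mulr1 /M mu_gap /gap; ring.
Qed.
End Split.
End CircularPotential.

Lemma in_hull_inQstar (R : realType) m n (A : 'M[R]_(m, n)) b x :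
  in_hull (fun z => inQ A b z /\ integral z) x -> inQstar A b x.
Proof.
move=> [s [Ps S1 ->]]; pose z t := nth (0, 0) s t.
have Pz (t : 'I_(size s)) := Ps _ (mem_nth (0, 0) (ltn_ord t)).
exists (size s), (fun t => (z t).2), (fun t => (z t).1).
split=> [t | t | t | |]; try by case: (Pz t) => [? []].
  by rewrite -S1 (big_nth (0, 0)) big_mkord.
by rewrite (big_nth (0, 0)) big_mkord.
Qed.

Theorem lemma3p5 (R : realType) (m n : nat) (A : 'M[R]_(m, n))
    (l : 'I_m -> 'I_n) (k : 'I_m -> nat) (b : 'I_m -> nat) (x : 'cV[R]_n) :
  circular A l k ->
  inQ A b x ->
  (forall c : seq (darc m n), circuit l k c -> 0 <= path_cost A b x c) ->
  inQstar A b x.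
Proof.
move=> [k_bnd ->{A}] xQ Hc; apply: in_hull_inQstar.
case: n l x k_bnd xQ Hc => [|n] l x k_bnd xQ Hc.
  by apply: in_hull1; split=> // [[]].
have k_le i : (k i <= n.+1)%N by case/andP: (k_bnd i) => _ /leq_trans->.
have [M0 | M_neq0] := eqVneq (mu x) 0.
  apply: (inQ_int_sum_in_hull k_le (beta := Num.ceil (\sum_j x j 0))) => //.
  by move/eqP: M0; rewrite mu_gap /gap subr_eq0 => /eqP ->.
have M_gt0 : 0 < mu x by rewrite lt0r M_neq0 mu_gap gap_ge0.
have [pi pi_pot] := circuit_potential Hc.
have [x1 [x2 [-> x1Q x2Q s1 s2]]] := split_by_potential k_le pi_pot M_gt0 xQ.
apply: in_hull_mix; first by rewrite ltW //= ltW // mu_gap gap_lt1.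
  exact: inQ_int_sum_in_hull s1.
exact: inQ_int_sum_in_hull s2.
Qed.
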